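(* There is no non-trivial quotient $Q$ of the identity functor on the category of abelian groups such that $Q(A)$ is divisible for every abelian group $A$.
   Context: A quotient of the identity functor on abelian groups is a functor $Q$ with a natural transformation $q:\mathrm{Id}\to Q$ such that each $q_A:A\to Q(A)$ is surjective; it is non-trivial if $Q(A)\neq 0$ for some $A$. *)

From HB Require Import structures.
From mathcomp Require Import all_boot all_order all_algebra.
Set Implicit Arguments. Unset Strict Implicit. Unset Printing Implicit Defensive.
Import GRing.Theory.
Local Open Scope ring_scope.

(* A quotient of the identity functor on abelian groups: an endofunctor Q of
   Ab together with a natural transformation q : Id -> Q whose components are
   surjective. *)
Record id_quotient := IdQuotient {
  Qobj : zmodType -> zmodType;
  Qmap : forall (A B : zmodType), {additive A -> B} -> {additive Qobj A -> Qobj B};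
  Qmap_id : forall (A : zmodType) (x : Qobj A),
      Qmap (idfun : {additive A -> A}) x = x;
  Qmap_comp : forall (A B C : zmodType) (f : {additive A -> B})
      (g : {additive B -> C}) (x : Qobj A),
      Qmap (g \o f : {additive A -> C}) x = Qmap g (Qmap f x);
  qnat : forall (A : zmodType), {additive A -> Qobj A};
  qnat_natural : forall (A B : zmodType) (f : {additive A -> B}) (x : A),
      Qmap f (qnat A x) = qnat B (f x);
  qnat_surj : forall (A : zmodType) (y : Qobj A), exists x : A, qnat A x = y
}.

Definition id_quotient_nontrivial (Q : id_quotient) : Prop :=
  exists (A : zmodType) (y : Qobj Q A), y != 0.

Definition divisible_group (D : zmodType) : Prop :=
  forall (n : nat), (0 < n)%N -> forall y : D, exists x : D, x *+ n = y.

(* Naturality and surjectivity of q make Q(Z) cyclic, generated by q(1).  A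
   divisible cyclic group is trivial: writing the generator as twice a
   multiple k of itself gives it the odd order-multiple 2k - 1, and dividing
   it by that order then kills it.  Finally every element of Q(A) is the image
   of q(1) under Q(n |-> n a), so Q(A) = 0 for all A. *)

From HB Require Import structures.
From mathcomp Require Import all_boot all_order all_algebra.
From mathcomp Require Import zify.
Import GRing.Theory.
Local Open Scope ring_scope.

Lemma mulrz_eq0_mulrn (D : zmodType) (x : D) (m : int) :
  x *~ m = 0 -> x *+ `|m|%N = 0.
Proof. by case: m => n //= /eqP; rewrite oppr_eq0 => /eqP. Qed.

Section CyclicDivisible.

Variables (D : zmodType) (g : D).
Hypothesis D_divisible : divisible_group D.
Hypothesis g_generates : forall y : D, exists k : int, y = g *~ k.

Lemma cyclic_divisible_torsion : exists2 N : nat, (0 < N)%N & g *+ N = 0.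
Proof.
have [x x2_eq_g] := D_divisible 2 isT g.
have [k x_eq] := g_generates x.
have odd_order : g *~ (2 * k - 1) = 0.
  by rewrite mulrzBr mulrC mulrzA -x_eq mulrz_nat x2_eq_g subrr.
exists (absz (2 * k - 1)%R); first by rewrite absz_gt0; lia.
exact: mulrz_eq0_mulrn.
Qed.

Lemma cyclic_divisible_eq0 : g = 0.
Proof.
have [N N_gt0 gN_eq0] := cyclic_divisible_torsion.
have [x xN_eq_g] := D_divisible N N_gt0 g.
have [k x_eq] := g_generates x.
by rewrite -xN_eq_g x_eq -mulrz_nat mulrzAC mulrz_nat gN_eq0 mul0rz.
Qed.

End CyclicDivisible.

Lemma id_quotient_int_cyclic (Q : id_quotient) (y : Qobj Q int) :
  exists k : int, y = qnat Q int 1 *~ k.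
Proof. by have [k <-] := qnat_surj y; exists k; rewrite -raddfMz intz. Qed.

Lemma id_quotient_eq0 {Q : id_quotient} :
  qnat Q int 1 = 0 -> forall (A : zmodType) (y : Qobj Q A), y = 0.
Proof.
move=> q1_eq0 A y; have [a <-] := qnat_surj y.
have -> : a = ( *~%R a : {additive int -> A}) 1 by rewrite /= mulr1z.
by rewrite -qnat_natural q1_eq0 raddf0.
Qed.

Theorem corollary3p20 :
  ~ (exists Q : id_quotient,
        id_quotient_nontrivial Q /\ forall A : zmodType, divisible_group (Qobj Q A)).
Proof.
move=> [Q [[A [y y_neq0]] Q_divisible]].
have q1_eq0 : qnat Q int 1 = 0.
  exact: cyclic_divisible_eq0 (Q_divisible int) (id_quotient_int_cyclic Q).
by rewrite (id_quotient_eq0 q1_eq0 _ y) eqxx in y_neq0.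
Qed.
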